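(* Consider the weighted-bins process with unit-weight balls and an $(\alpha,\beta)$-biased distribution $\mathcal D$ with $\alpha,\beta>1$, and let $0<\epsilon\le\frac{2\ln\left(\frac{\alpha\beta-1}{\alpha\beta-\beta}\right)}{\ln\left(\frac{\alpha\beta-1}{\alpha-1}\right)}-1$. Then for every $t\ge0$, $\mathrm{Gap}_{1+\epsilon}(t)$ stochastically dominates $\mathrm{Gap}(t)$, i.e., $\Pr[\mathrm{Gap}_{1+\epsilon}(t)\le b]\le\Pr[\mathrm{Gap}(t)\le b]$ for all real $b$.
   Context: Weighted balls into weighted bins: $n$ bins with positive integer weights $N_1,\dots,N_n$, $N=\sum_iN_i$; $\mathcal D$ on $[n]$ is $(\alpha,\beta)$-biased: $\frac{N_i}{\alpha N}\le\Pr_{\mathcal D}[i]\le\frac{\beta N_i}{N}$. Each round, two bins are sampled independently from $\mathcal D$ and a unit-weight ball is placed in the sampled bin with smaller value $v_i(t-1)=w_i(t-1)/N_i$ ($w_i(t)$ = number of balls in bin $i$ after round $t$); $\mathrm{Gap}(t)=\max_iv_i(t)-\min_jv_j(t)$. The $(1+\epsilon)$-choice process with $N$ bins: unit-weight balls are thrown into $N$ unit-size bins; at each step, with the bins sorted by load in nonincreasing order, the ball is placed into one of the $i$ most loaded bins with probability $\phi_i=(i/N)^{1+\epsilon}$ (so the $i$-th most loaded bin receives it with probability $\phi_i-\phi_{i-1}$, $\phi_0=0$). $\mathrm{Gap}_{1+\epsilon}(t)$ is the difference between the maximum and minimum bin load of this process after $t$ steps (both processes start empty). *)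

From HB Require Import structures.
From mathcomp Require Import all_boot all_order all_algebra.
From mathcomp Require Import reals exp.
Set Implicit Arguments. Unset Strict Implicit. Unset Printing Implicit Defensive.
Import Order.TTheory GRing.Theory Num.Theory.
Local Open Scope ring_scope.

Definition wstate (n : nat) := 'I_n -> nat.

Definition wempty (n : nat) : wstate n := fun _ => 0%N.

Definition wadd (n : nat) (w : wstate n) (c : 'I_n) : wstate n :=
  fun k => if k == c then (w k).+1 else w k.

Definition wval (R : realType) (n : nat) (Nw : 'I_n -> nat) (w : wstate n)
  (i : 'I_n) : R := (w i)%:R / (Nw i)%:R.

(* Gap = max_i v_i - min_j v_j = max over pairs (i,j) of v_i - v_j *)
Definition wgap (R : realType) (n : nat) (Nw : 'I_n -> nat) (w : wstate n) : R :=
  \big[Num.max/0]_(i < n) \big[Num.max/0]_(j < n) (wval R Nw w i - wval R Nw w j).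

(* A selection rule: given the current state and the two sampled bins i, j,
   returns the bin receiving the ball. *)
Definition valid_selection (R : realType) (n : nat) (Nw : 'I_n -> nat)
  (sel : wstate n -> 'I_n -> 'I_n -> 'I_n) : Prop :=
  forall w i j,
    (sel w i j = i \/ sel w i j = j) /\
    wval R Nw w (sel w i j) <= wval R Nw w i /\
    wval R Nw w (sel w i j) <= wval R Nw w j.

(* Expectation of f(state after t more rounds), starting from state w:
   each round samples i, j independently from D. *)
Fixpoint wexp (R : realType) (n : nat) (D : 'I_n -> R)
  (sel : wstate n -> 'I_n -> 'I_n -> 'I_n) (f : wstate n -> R)
  (t : nat) (w : wstate n) : R :=
  match t with
  | 0%N => f w
  | t'.+1 => \sum_(i < n) \sum_(j < n)
              D i * D j * wexp D sel f t' (wadd w (sel w i j))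
  end.

Definition wprob_gap_le (R : realType) (n : nat) (Nw : 'I_n -> nat)
  (D : 'I_n -> R) (sel : wstate n -> 'I_n -> 'I_n -> 'I_n) (t : nat) (b : R) : R :=
  wexp D sel (fun w => if wgap R Nw w <= b then 1 else 0) t (@wempty n).

Definition biased (R : realType) (n : nat) (Nw : 'I_n -> nat) (D : 'I_n -> R)
  (alpha beta : R) : Prop :=
  let Ntot := (\sum_(i < n) Nw i)%N in
  (\sum_(i < n) D i = 1) /\
  forall i, (Nw i)%:R / (alpha * Ntot%:R) <= D i /\ D i <= beta * (Nw i)%:R / Ntot%:R.

(* A state is the sequence of bin loads sorted in nonincreasing order. *)
Definition cstate := seq nat.

Definition cempty (NN : nat) : cstate := nseq NN 0%N.

(* put the ball into the bin at (0-based) rank k, i.e. the (k+1)-th most loaded,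
   then re-sort in nonincreasing order *)
Definition cadd (s : cstate) (k : nat) : cstate :=
  sort geq (set_nth 0%N s k (nth 0%N s k).+1).

Definition phi (R : realType) (NN : nat) (eps : R) (i : nat) : R :=
  powR (i%:R / NN%:R) (1 + eps).

(* max load - min load = max over pairs of (a - b) *)
Definition cgap (s : cstate) : nat :=
  (\max_(a <- s) \max_(b <- s) (a - b))%N.

Fixpoint cexp (R : realType) (NN : nat) (eps : R) (f : cstate -> R)
  (t : nat) (s : cstate) : R :=
  match t with
  | 0%N => f s
  | t'.+1 => \sum_(k < NN) (phi NN eps k.+1 - phi NN eps k) * cexp NN eps f t' (cadd s k)
  end.

Definition cprob_gap_le (R : realType) (NN : nat) (eps : R) (t : nat) (b : R) : R :=
  cexp NN eps (fun s => if (cgap s)%:R <= b then 1 else 0) t (cempty NN).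

From HB Require Import structures.
From mathcomp Require Import all_boot all_order all_algebra.
From mathcomp Require Import reals exp.
From mathcomp Require Import convex interval_inference.
From mathcomp Require Import zify ring lra.
Import Order.TTheory GRing.Theory Num.Theory.
Set Implicit Arguments. Unset Strict Implicit. Unset Printing Implicit Defensive.

(* Couple the processes through a majorization invariant [coupled]: view bin [i]
   as [N_i] unit bins filled evenly; then at every level [m] the sorted loads of the
   (1+eps)-process have at least as many balls above [m] as the weighted loads,
   which forces [Gap <= Gap_{1+eps}].  When the weighted process feeds bin [c], the
   invariant survives if the (1+eps)-process feeds any rank [k < wrank c]; so it
   suffices that [wrank] of the weighted choice is stochastically larger than the
   rank law [phi], i.e. [Pr[wrank <= m] <= phi m].  If [b] has least value among
   the bins of rank [<= m], both samples must fall into the set of bins at least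
   as full as [b], of relative weight [s <= m / N] and D-mass
   [d <= min (beta s) (1 - (1 - s) / alpha)]; the bound on [eps] is exactly what
   gives [d ^ 2 <= s ^ (1 + eps)]. *)

Definition seq_excess (x : seq nat) (m : nat) : nat := \sum_(a <- x) (a - m).

(* Bin [i] is seen as [Nw i] unit bins filled evenly: [w i - m * Nw i] is its
   number of balls above the level [m]. *)
Definition wexcess n (Nw : 'I_n -> nat) (w : wstate n) (m : nat) : nat :=
  \sum_(i < n) (w i - m * Nw i).

Definition coupled n (Nw : 'I_n -> nat) (x : cstate) (w : wstate n) : Prop :=
  [/\ size x = (\sum_(i < n) Nw i)%N, sorted geq x,
      \sum_(a <- x) a = \sum_(i < n) w i
    & forall m, wexcess Nw w m <= seq_excess x m].

Definition wrank (R : realType) n (Nw : 'I_n -> nat) (w : wstate n) (c : 'I_n) : nat :=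
  \sum_(j < n | (wval R Nw w c <= wval R Nw w j)%R) Nw j.

Lemma sorted_geq_nth (x : seq nat) i j :
  sorted geq x -> i <= j < size x -> nth 0 x j <= nth 0 x i.
Proof.
move=> x_sorted /andP[le_ij lt_j].
have geq_trans : transitive geq by move=> a b c h1 h2; exact: leq_trans h2 h1.
apply: (sorted_leq_nth geq_trans (fun a => leqnn a)) => //.
by rewrite inE (leq_ltn_trans le_ij lt_j).
Qed.

Lemma sum_set_nth (f : nat -> nat) (s : seq nat) k y : k < size s ->
  \sum_(a <- set_nth 0 s k y) f a + f (nth 0 s k) = \sum_(a <- s) f a + f y.
Proof.
elim: s k => [|a s IH] [|k] //= lt_k; rewrite !big_cons; first lia.
by rewrite -addnA IH //; lia.
Qed.

Lemma sum_cadd (f : nat -> nat) (x : seq nat) k : k < size x ->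
  \sum_(a <- cadd x k) f a + f (nth 0 x k) = \sum_(a <- x) f a + f (nth 0 x k).+1.
Proof.
move=> lt_k; rewrite -(sum_set_nth f _ lt_k); congr (_ + _).
by apply: perm_big; rewrite perm_sort.
Qed.

Lemma sum_wadd n (w : wstate n) b (f : nat -> nat -> nat) (g : 'I_n -> nat) :
  \sum_(i < n) f (wadd w b i) (g i) + f (w b) (g b) =
  \sum_(i < n) f (w i) (g i) + f (w b).+1 (g b).
Proof.
rewrite (bigD1 b) //= [in RHS](bigD1 b) //= /wadd eqxx.
rewrite (eq_bigr (fun i => f (w i) (g i))) => [|i /negbTE -> //].
lia.
Qed.

Lemma seq_excess_le_shift (s : seq nat) k c m :
  k <= size s -> (forall i, k <= i < size s -> nth 0 s i <= c) -> c <= m ->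
  seq_excess s c <= seq_excess s m + k * (m - c).
Proof.
rewrite /seq_excess; elim: s k => [|a s IH] [|k] //= le_k small le_cm.
- by rewrite !big_nil.
- rewrite big1_seq // => b /andP[_ /(nthP 0) [i lt_i <-]].
  by apply/eqP; rewrite subn_eq0; apply: small.
- rewrite !big_cons mulSn.
  have := IH k le_k (fun i => small i.+1) le_cm; lia.
Qed.

Lemma wexcess_le_shift n (Nw : 'I_n -> nat) (w : wstate n) (P : pred 'I_n) c m :
  c <= m -> (forall j, P j -> m * Nw j <= w j) ->
  wexcess Nw w m + (m - c) * \sum_(j < n | P j) Nw j <= wexcess Nw w c.
Proof.
move=> le_cm high; rewrite /wexcess big_distrr /= [X in _ + X <= _]big_mkcond /=.
rewrite -big_split /=; apply: leq_sum => j _.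
have : c * Nw j <= m * Nw j by apply: leq_mul.
case: (boolP (P j)) => [/high|_] /=; rewrite ?mulnBl; lia.
Qed.

Lemma nat_le_wval (R : realType) n (Nw : 'I_n -> nat) (w : wstate n) i m :
  0 < Nw i -> (m * Nw i <= w i) = (m%:R <= wval R Nw w i)%R.
Proof. by move=> Ni_gt0; rewrite /wval ler_pdivlMr ?ltr0n // -natrM ler_nat. Qed.

Lemma wval_le_nat (R : realType) n (Nw : 'I_n -> nat) (w : wstate n) i m :
  0 < Nw i -> (w i <= m * Nw i) = (wval R Nw w i <= m%:R)%R.
Proof. by move=> Ni_gt0; rewrite /wval ler_pdivrMr ?ltr0n // -natrM ler_nat. Qed.

Lemma coupled_excess_step (R : realType) n (Nw : 'I_n -> nat) x w k b m :
  (forall i, 0 < Nw i) -> coupled Nw x w -> k < size x -> k < wrank R Nw w b ->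
  wexcess Nw (wadd w b) m <= seq_excess (cadd x k) m.
Proof.
move=> Nw_gt0 [_ x_sorted _ dom] lt_k lt_kb.
have := sum_cadd (fun a => a - m) lt_k; have := sum_wadd w b (fun a c => a - m * c) Nw.
rewrite /seq_excess /wexcess in dom *.
set xk := nth 0 x k => eW eX; have := dom m.
have [le_mxk|lt_xkm] := leqP m xk; first lia.
have [w_high|w_low] := leqP (m * Nw b) (w b); last lia.
(* The new ball lands above level [m] in both processes; levels [xk < m] pay for it:
   rank [k] has at most [k] entries above [xk], while at least [wrank b > k] unit
   bins of [w] are filled up to [m]. *)
have eX' : seq_excess x xk <= seq_excess x m + k * (m - xk).
  apply: seq_excess_le_shift; [exact: ltnW | | exact: ltnW].
  by move=> i /andP[le_ki lt_i]; apply: sorted_geq_nth; rewrite ?le_ki.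
have eW' : wexcess Nw w m + (m - xk) * wrank R Nw w b <= wexcess Nw w xk.
  apply: wexcess_le_shift => [|j le_bj]; first exact: ltnW.
  by rewrite (nat_le_wval R) // (le_trans _ le_bj) // -nat_le_wval.
have : (m - xk) * k.+1 <= (m - xk) * wrank R Nw w b by rewrite leq_mul2l lt_kb orbT.
have := dom xk; rewrite /seq_excess /wexcess in eX' eW'; nia.
Qed.

Lemma coupled_step (R : realType) n (Nw : 'I_n -> nat) x w k b :
  (forall i, 0 < Nw i) -> coupled Nw x w -> k < \sum_(i < n) Nw i ->
  k < wrank R Nw w b -> coupled Nw (cadd x k) (wadd w b).
Proof.
move=> Nw_gt0 cpl lt_kN lt_kb; have [size_x _ sum_x _] := cpl.
have lt_k : k < size x by rewrite size_x.
split.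
- by rewrite /cadd size_sort size_set_nth size_x; apply/maxn_idPr.
- by apply: sort_sorted => a c; apply: leq_total.
- have := sum_cadd id lt_k; have := sum_wadd w b (fun a _ => a) (fun _ => 0).
  rewrite /= -sum_x; lia.
- by move=> m; exact: coupled_excess_step Nw_gt0 cpl lt_k lt_kb.
Qed.

Lemma coupled_empty n (Nw : 'I_n -> nat) :
  coupled Nw (cempty (\sum_(i < n) Nw i)) (@wempty n).
Proof.
rewrite /cempty /wempty; split.
- by rewrite size_nseq.
- by elim: (\sum_(i < n) Nw i) => //= -[].
- by rewrite [RHS]big1 // big1_seq // => a /andP[_ /nseqP[->]].
- by move=> m; rewrite /wexcess big1.
Qed.

Lemma sum_subn_addn (I : Type) (r : seq I) (f g : I -> nat) :
  \sum_(i <- r) (f i - g i) + \sum_(i <- r) g i =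
  \sum_(i <- r) f i + \sum_(i <- r) (g i - f i).
Proof. by rewrite -!big_split; apply: eq_bigr => i _ /=; lia. Qed.

Section CoupledGap.
Variables (n : nat) (Nw : 'I_n -> nat) (x : cstate) (w : wstate n).
Hypotheses (Nw_gt0 : forall i, 0 < Nw i) (cpl : coupled Nw x w) (x_gt0 : 0 < size x).

Local Notation xmax := (nth 0 x 0).
Local Notation xmin := (nth 0 x (size x).-1).

Lemma coupled_mem_bounds a : a \in x -> xmin <= a <= xmax.
Proof.
have [_ x_sorted _ _] := cpl.
move=> /(nthP 0) [i lt_i <-]; apply/andP; split; apply: sorted_geq_nth => //.
by rewrite ltn_predL x_gt0 andbT -ltnS prednK.
Qed.

Lemma coupled_load_le_max j : w j <= xmax * Nw j.
Proof.
have [_ _ _ dom] := cpl.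
have : seq_excess x xmax = 0.
  apply: big1_seq => a /andP[_ /coupled_mem_bounds /andP[_ le_a]].
  by apply/eqP; rewrite subn_eq0.
move: (dom xmax) => /[swap] -> /[!leqn0] /[!sum_nat_eq0] /forallP /(_ j) /=.
by rewrite subn_eq0.
Qed.

Lemma coupled_load_ge_min j : xmin * Nw j <= w j.
Proof.
have [size_x _ sum_x dom] := cpl.
have ex : seq_excess x xmin + size x * xmin = \sum_(a <- x) a.
  have -> : size x * xmin = \sum_(a <- x) xmin.
    by rewrite big_const_seq count_predT iter_addn_0 mulnC.
  rewrite sum_subn_addn [X in _ + X]big1_seq ?addn0 // => a /andP[_].
  by case/coupled_mem_bounds/andP => le_a _; apply/eqP; rewrite subn_eq0.
have ew : wexcess Nw w xmin + xmin * \sum_(i < n) Nw i =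
          \sum_(i < n) w i + \sum_(i < n) (xmin * Nw i - w i).
  by rewrite big_distrr sum_subn_addn.
have : \sum_(i < n) (xmin * Nw i - w i) = 0.
  by move: (dom xmin) ex ew; rewrite -size_x sum_x; lia.
by move/eqP; rewrite sum_nat_eq0 => /forallP /(_ j) /=; rewrite subn_eq0.
Qed.

Lemma coupled_wgap_le (R : realType) : (wgap R Nw w <= (cgap x)%:R)%R.
Proof.
have xmax_in : xmax \in x by apply: mem_nth.
have xmin_in : xmin \in x by apply: mem_nth; rewrite prednK.
have le_minmax : xmin <= xmax by case/andP: (coupled_mem_bounds xmin_in).
have le_gap : xmax - xmin <= cgap x.
  apply: leq_trans (leq_bigmax_seq xmax xmax_in isT).
  exact: leq_bigmax_seq xmin xmin_in isT.
apply: (@le_trans _ _ (xmax%:R - xmin%:R)%R); last by rewrite -natrB // ler_nat.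
apply: bigmax_le => [|i _]; first by rewrite subr_ge0 ler_nat.
apply: bigmax_le => [|j _]; first by rewrite subr_ge0 ler_nat.
apply: lerB; first by rewrite -wval_le_nat ?coupled_load_le_max.
by rewrite -nat_le_wval ?coupled_load_ge_min.
Qed.

End CoupledGap.

Local Open Scope ring_scope.

Section Coupling.
Variable R : realFieldType.

Lemma sum_by_parts (N : nat) (d H : nat -> R) :
  \sum_(k < N.+1) d k * H k = (\sum_(k < N.+1) d k) * H N
     - \sum_(k < N) (\sum_(j < k.+1) d j) * (H k.+1 - H k).
Proof.
elim: N => [|N IH]; first by rewrite !big_ord1 big_ord0 subr0.
rewrite big_ord_recr /= IH [\sum_(k < N.+2) d k]big_ord_recr /=.
rewrite [\sum_(k < N.+1) (\sum_(j < k.+1) d j) * _]big_ord_recr /=.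
ring.
Qed.

Lemma ler_sum_cdf (N : nat) (p r H : nat -> R) :
  (forall m, (m <= N)%N -> \sum_(k < m) r k <= \sum_(k < m) p k) ->
  \sum_(k < N) r k = \sum_(k < N) p k ->
  (forall k, H k <= H k.+1) ->
  \sum_(k < N) p k * H k <= \sum_(k < N) r k * H k.
Proof.
case: N => [|N] cdf_le sum_eq H_mono; first by rewrite !big_ord0.
rewrite -subr_ge0 -sumrB; under eq_bigr do rewrite -mulrBl.
rewrite (sum_by_parts N (fun k => r k - p k)) sumrB sum_eq subrr mul0r sub0r oppr_ge0.
apply: sumr_le0 => k _; apply: mulr_le0_ge0; last by rewrite subr_ge0.
by rewrite sumrB subr_le0 cdf_le // ltnS ltnW.
Qed.

Lemma sum_eqS_mul (N l : nat) (X : nat -> R) : (0 < l <= N)%N ->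
  \sum_(k < N) (l == k.+1)%:R * X k = X l.-1.
Proof.
case: l => // l /= lt_lN; rewrite (bigD1 (Ordinal lt_lN)) //= eqxx mul1r.
rewrite big1 ?addr0 // => k; rewrite -val_eqE /= eq_sym eqSS => /negbTE ->.
by rewrite mul0r.
Qed.

Lemma sum_eqS (m l : nat) : (0 < l)%N ->
  \sum_(k < m) (l == k.+1)%:R = (l <= m)%:R :> R.
Proof.
move=> l_gt0; elim: m => [|m IH]; first by rewrite big_ord0 leqNgt l_gt0.
rewrite big_ord_recr /= IH; have [le_lm|lt_ml] := leqP l m.
  by rewrite leqW // ltn_eqF ?addr0.
by rewrite add0r leq_eqVlt ltnS leqNgt lt_ml orbF.
Qed.

(* With [H k] the least [G i] over [k < L i], which is nondecreasing in [k], this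
   reduces to [ler_sum_cdf] for the law of [L i - 1] under [q]. *)
Lemma ler_sum_coupling (I : finType) (N : nat) (p : nat -> R) (q : I -> R)
    (L : I -> nat) (F : nat -> R) (G : I -> R) (i0 : I) :
  (forall k, 0 <= p k) -> (forall i, 0 <= q i) -> (forall i, 0 < L i <= N)%N ->
  (N <= L i0)%N ->
  \sum_i q i = \sum_(k < N) p k ->
  (forall m, (m <= N)%N -> \sum_(i | (L i <= m)%N) q i <= \sum_(k < m) p k) ->
  (forall k i, (k < N)%N -> (k < L i)%N -> F k <= G i) ->
  \sum_(k < N) p k * F k <= \sum_i q i * G i.
Proof.
move=> p_ge0 q_ge0 L_range L_i0 sum_qp cdf_qp le_FG.
pose H k := \big[Num.min/G i0]_(i | (k < L i)%N) G i.
have le_HG k i : (k < L i)%N -> H k <= G i by exact: bigmin_le_cond.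
have le_FH k : (k < N)%N -> F k <= H k.
  move=> lt_kN; apply: le_bigmin => [|i]; last exact: le_FG.
  exact/le_FG/(leq_trans lt_kN).
have H_mono k : H k <= H k.+1.
  apply: le_bigmin => [|i lt_ki]; first exact: bigmin_le_id.
  exact/le_HG/ltnW.
pose r k := \sum_i q i * (L i == k.+1)%:R.
have cdf_r m : \sum_(k < m) r k = \sum_(i | (L i <= m)%N) q i.
  rewrite /r exchange_big [RHS]big_mkcond /=; apply: eq_bigr => i _.
  rewrite -mulr_sumr sum_eqS; last by case/andP: (L_range i).
  by case: leqP; rewrite ?mulr1 ?mulr0.
have sum_rH : \sum_(k < N) r k * H k = \sum_i q i * H (L i).-1.
  rewrite /r; under eq_bigr do rewrite mulr_suml.
  rewrite exchange_big; apply: eq_bigr => i _.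
  under eq_bigr do rewrite -mulrA.
  by rewrite -mulr_sumr sum_eqS_mul.
apply: (@le_trans _ _ (\sum_(k < N) p k * H k)).
  by apply: ler_sum => k _; rewrite ler_wpM2l ?le_FH.
apply: (@le_trans _ _ (\sum_(k < N) r k * H k)).
  apply: ler_sum_cdf => // [m le_mN|]; first by rewrite cdf_r cdf_qp.
  by rewrite cdf_r -sum_qp; apply: eq_bigl => i; case/andP: (L_range i) => _ ->.
rewrite sum_rH; apply: ler_sum => i _; rewrite ler_wpM2l ?le_HG //.
by case/andP: (L_range i) => L_gt0 _; rewrite prednK.
Qed.

End Coupling.

Section PowerBounds.
Variable R : realType.

Lemma powR_le_affine (r c : R) : 0 < r -> 0 <= c <= 1 -> r `^ c <= c * r + (1 - c).
Proof.
move=> r_gt0 /andP[c_ge0 c_le1].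
have := @concave_ln R (Itv01 c_ge0 c_le1) r 1 r_gt0 ltr01.
rewrite !convRE /= /unstable.onem ln1 mulr0 addr0 mulr1 => ln_le.
have aff_gt0 : 0 < c * r + (1 - c).
  have [->|c_neq0] := eqVneq c 0; first by rewrite mul0r add0r subr0.
  by rewrite ltr_pwDl ?subr_ge0 // mulr_gt0 // lt_neqAle eq_sym c_neq0.
by rewrite /powR gt_eqF // -(lnK aff_gt0) ler_expR.
Qed.

Lemma powR_le_tangent (a s c : R) : 0 < a -> 0 < s -> 0 <= c <= 1 ->
  a `^ c <= (c * (a / s) + (1 - c)) * s `^ c.
Proof.
move=> a_gt0 s_gt0 c01; rewrite -{1}(divfK (lt0r_neq0 s_gt0) a).
have as_gt0 : 0 < a / s by rewrite divr_gt0.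
rewrite powRM ?(ltW as_gt0) ?(ltW s_gt0) // ler_pM2r ?powR_gt0 //.
exact: powR_le_affine.
Qed.

Lemma powR_concave (a b lam c : R) : 0 < a -> 0 < b -> 0 <= lam <= 1 -> 0 <= c <= 1 ->
  lam * a `^ c + (1 - lam) * b `^ c <= (lam * a + (1 - lam) * b) `^ c.
Proof.
move=> a_gt0 b_gt0 /andP[lam_ge0 lam_le1] c01.
set s := lam * a + (1 - lam) * b.
have s_gt0 : 0 < s.
  rewrite /s; have [->|lam_neq0] := eqVneq lam 0; first by rewrite mul0r add0r subr0 mul1r.
  rewrite ltr_pwDl ?mulr_ge0 ?subr_ge0 ?(ltW b_gt0) //.
  by rewrite mulr_gt0 // lt_neqAle eq_sym lam_neq0.
apply: (@le_trans _ _ (lam * ((c * (a / s) + (1 - c)) * s `^ c)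
                       + (1 - lam) * ((c * (b / s) + (1 - c)) * s `^ c))).
  by apply: lerD; apply: ler_wpM2l; rewrite ?subr_ge0 ?powR_le_tangent.
have s_neq0 : s != 0 by rewrite gt_eqF.
have -> : lam * ((c * (a / s) + (1 - c)) * s `^ c)
          + (1 - lam) * ((c * (b / s) + (1 - c)) * s `^ c)
        = (c * ((lam * a + (1 - lam) * b) / s) + (1 - c)) * s `^ c by field.
by rewrite -/s divff // mulr1 subrKC mul1r.
Qed.

Lemma powR_mulB1 (s c : R) : 0 < s -> s `^ c * s `^ (1 - c) = s.
Proof.
move=> s_gt0; rewrite -powRD ?subrKC ?powRr1 ?(ltW s_gt0) //.
by apply/implyP => _; rewrite gt_eqF.
Qed.

Lemma powR_ge_small (beta s s0 c : R) : 0 < s <= s0 -> c <= 1 -> 0 <= beta ->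
  beta * s0 <= s0 `^ c -> beta * s <= s `^ c.
Proof.
move=> /andP[s_gt0 le_ss0] c_le1 beta_ge0 crossing.
have s0_gt0 : 0 < s0 := lt_le_trans s_gt0 le_ss0.
have le_pow : s `^ (1 - c) <= s0 `^ (1 - c).
  by apply: ge0_ler_powR; rewrite ?subr_ge0 // nnegrE ltW.
have le1 : beta * s0 `^ (1 - c) <= 1.
  have pow_gt0 : 0 < s0 `^ c by apply: powR_gt0.
  by rewrite -(ler_pM2l pow_gt0) mulr1 mulrCA powR_mulB1.
rewrite -{1}(powR_mulB1 c s_gt0) mulrCA -[X in _ <= X]mulr1.
by rewrite ler_wpM2l ?powR_ge0 // (le_trans _ le1) // ler_wpM2l.
Qed.

Section BiasedBound.
Variables alpha beta eps : R.
Hypotheses (alpha_gt1 : 1 < alpha) (beta_gt1 : 1 < beta) (eps_gt0 : 0 < eps)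
  (eps_le : eps <= 2 * ln ((alpha * beta - 1) / (alpha * beta - beta))
                   / ln ((alpha * beta - 1) / (alpha - 1)) - 1).

(* [s0] is where the bounds [beta * s] and [1 - (1 - s) / alpha] on the mass of a
   set of relative weight [s] cross; the hypothesis on [eps] says exactly that the
   crossing value [beta * s0] is below [s0 `^ ((1 + eps) / 2)]. *)
Let s0 := (alpha - 1) / (alpha * beta - 1).
Let c := (1 + eps) / 2.

Let alpha_gt0 : 0 < alpha. Proof. exact: lt_trans ltr01 alpha_gt1. Qed.
Let beta_gt0 : 0 < beta. Proof. exact: lt_trans ltr01 beta_gt1. Qed.
Let ab1_gt0 : 0 < alpha * beta - 1.
Proof. by rewrite subr_gt0 (lt_trans alpha_gt1) // ltr_pMr. Qed.
Let s0_gt0 : 0 < s0. Proof. by rewrite /s0 divr_gt0 // subr_gt0. Qed.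
Let s0_lt1 : s0 < 1. Proof. by rewrite /s0 ltr_pdivrMr // mul1r ltrD2r ltr_pMr. Qed.

Let crossing : beta * s0 <= s0 `^ c.
Proof.
have bs0_gt0 : 0 < beta * s0 by rewrite mulr_gt0.
have ln_s0 : ln ((alpha * beta - 1) / (alpha - 1)) = - ln s0.
  by rewrite -lnV ?posrE // invf_div.
have ln_bs0 : ln ((alpha * beta - 1) / (alpha * beta - beta)) = - ln (beta * s0).
  by rewrite -lnV ?posrE // /s0 mulrA invf_div; congr (ln (_ / _)); ring.
have ln_s0_lt0 : ln s0 < 0 by rewrite ln_lt0 // s0_gt0 s0_lt1.
have := eps_le; rewrite ln_s0 ln_bs0 lerBrDr ler_pdivlMr ?oppr_gt0 // => le_eps.
by rewrite /powR gt_eqF // -(lnK bs0_gt0) ler_expR /c; nra.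
Qed.

Let c_gt0 : 0 < c. Proof. by rewrite /c divr_gt0 // addr_gt0. Qed.

Let c_lt1 : c < 1.
Proof.
rewrite ltNge; apply/negP => c_ge1.
have : s0 `^ c <= s0.
  rewrite -[X in _ <= X]powRr1; last exact: ltW.
  by apply: ger_powR; rewrite // s0_gt0 ltW.
have : s0 < beta * s0 by rewrite ltr_pMl.
move: crossing; lra.
Qed.

Lemma sq_le_powR_of_mass (s d : R) : 0 < s <= 1 -> 0 <= d ->
  d <= beta * s -> d <= 1 - (1 - s) / alpha -> d ^+ 2 <= s `^ (1 + eps).
Proof.
move=> /andP[s_gt0 s_le1] d_ge0 d_small d_large.
suff d_le : d <= s `^ c.
  rewrite (_ : 1 + eps = c * 2%:R); last by rewrite /c; field.
  by rewrite powRrM powR_mulrn ?powR_ge0 // lerXn2r ?nnegrE ?powR_ge0.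
have [le_ss0|lt_s0s] := leP s s0.
  apply: le_trans d_small (powR_ge_small _ (ltW c_lt1) (ltW beta_gt0) crossing).
  by rewrite s_gt0.
pose lam := (1 - s) / (1 - s0).
have lam01 : 0 <= lam <= 1.
  by rewrite divr_ge0 ?ler_pdivrMr ?subr_ge0 ?subr_gt0 ?mul1r /=; lra.
have s_eq : s = lam * s0 + (1 - lam) * 1.
  by rewrite /lam; field; rewrite subr_eq0 eq_sym lt_eqF.
have mass_eq : 1 - (1 - s) / alpha = lam * (beta * s0) + (1 - lam) * 1 `^ c.
  have mass_den : alpha * beta - 1 - (alpha - 1) = alpha * (beta - 1) by ring.
  rewrite powR1 /lam /s0; field.
  rewrite mass_den; apply/and3P; split; apply: lt0r_neq0 => //.
  by rewrite mulr_gt0 // subr_gt0.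
apply: le_trans d_large _; rewrite mass_eq [X in _ <= X `^ _]s_eq.
apply: le_trans (powR_concave _ _ lam01 _) => //; last by rewrite !ltW.
by rewrite lerD2r ler_wpM2l //; case/andP: lam01.
Qed.

End BiasedBound.

End PowerBounds.

Section Phi.
Variables (R : realType) (NN : nat) (eps : R).
Hypothesis eps_gt0 : 0 < eps.

Lemma powR_le_phi (s : R) k :
  0 <= s <= k%:R / NN%:R -> s `^ (1 + eps) <= phi NN eps k.
Proof.
case/andP=> s_ge0 s_le; apply: ge0_ler_powR; rewrite ?nnegrE ?divr_ge0 //.
by rewrite addr_ge0 // ltW.
Qed.

Lemma phi_le k l : (k <= l)%N -> phi NN eps k <= phi NN eps l.
Proof.
move=> le_kl; apply: powR_le_phi.
by rewrite divr_ge0 // ler_wpM2r ?invr_ge0 // ler_nat.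
Qed.

Lemma sum_phiD (m : nat) :
  \sum_(k < m) (phi NN eps k.+1 - phi NN eps k) = phi NN eps m.
Proof.
rewrite -(big_mkord xpredT (fun k => phi NN eps k.+1 - phi NN eps k)).
rewrite telescope_sumr // /phi mul0r powR0 ?subr0 //.
by rewrite gt_eqF // addr_gt0.
Qed.

End Phi.

Lemma phi_total (R : realType) (NN : nat) (eps : R) : (0 < NN)%N -> phi NN eps NN = 1.
Proof. by move=> NN_gt0; rewrite /phi divff ?powR1 // pnatr_eq0 -lt0n. Qed.

Lemma biased_mass_le (R : realType) n (Nw : 'I_n -> nat) (D : 'I_n -> R)
    (alpha beta : R) (U : pred 'I_n) :
  0 < alpha -> (0 < \sum_(i < n) Nw i)%N -> biased Nw D alpha beta ->
  let s := (\sum_(i < n | U i) Nw i)%:R / (\sum_(i < n) Nw i)%:R in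
  \sum_(i < n | U i) D i <= beta * s /\ \sum_(i < n | U i) D i <= 1 - (1 - s) / alpha.
Proof.
move=> alpha_gt0 NN_gt0 [D_sum D_bnd] s; split.
  rewrite /s natr_sum mulr_suml mulr_sumr; apply: ler_sum => i _.
  by rewrite mulrA; case: (D_bnd i).
have NN_neq0 : (\sum_(i < n) Nw i)%:R != 0 :> R by rewrite pnatr_eq0 -lt0n.
have comp_lo : (\sum_(i < n | ~~ U i) Nw i)%:R / (alpha * (\sum_(i < n) Nw i)%:R)
               <= \sum_(i < n | ~~ U i) D i.
  by rewrite natr_sum mulr_suml; apply: ler_sum => i _; case: (D_bnd i).
have -> : 1 - (1 - s) / alpha =
          1 - (\sum_(i < n | ~~ U i) Nw i)%:R / (alpha * (\sum_(i < n) Nw i)%:R).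
  have NN_split : (\sum_(i < n) Nw i)%:R = (\sum_(i < n | U i) Nw i)%:R
                   + (\sum_(i < n | ~~ U i) Nw i)%:R :> R by rewrite -natrD (bigID U).
  by rewrite /s NN_split; field; rewrite -NN_split NN_neq0 gt_eqF.
by move: comp_lo; have := D_sum; rewrite (bigID U) /=; lra.
Qed.

Section Domination.
Variables (R : realType) (n : nat) (Nw : 'I_n -> nat) (D : 'I_n -> R)
  (alpha beta eps : R) (sel : wstate n -> 'I_n -> 'I_n -> 'I_n).
Hypotheses (Nw_gt0 : forall i, (0 < Nw i)%N) (alpha_gt1 : 1 < alpha) (beta_gt1 : 1 < beta)
  (D_biased : biased Nw D alpha beta) (sel_valid : valid_selection R Nw sel)
  (eps_gt0 : 0 < eps)
  (eps_le : eps <= 2 * ln ((alpha * beta - 1) / (alpha * beta - beta))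
                   / ln ((alpha * beta - 1) / (alpha - 1)) - 1).

Local Notation NN := (\sum_(i < n) Nw i)%N.
Local Notation wval := (wval R Nw).

Let D_sum : \sum_(i < n) D i = 1. Proof. by case: D_biased. Qed.

Let D_ge0 i : 0 <= D i.
Proof.
case: D_biased => _ /(_ i) [+ _]; apply: le_trans.
by rewrite divr_ge0 // mulr_ge0 // ltW // (lt_trans ltr01).
Qed.

Let n_gt0 : (0 < n)%N.
Proof. by move: D_sum; case: n D => // D0; rewrite big_ord0 => /eqP; rewrite eq_sym oner_eq0. Qed.

Let i0 : 'I_n := Ordinal n_gt0.

Lemma total_weight_gt0 : (0 < NN)%N.
Proof. by rewrite (bigD1 i0) //= ltn_addr. Qed.

Definition wstep (w : wstate n) (c : 'I_n) : R :=
  \sum_(i < n) \sum_(j < n) D i * D j * (sel w i j == c)%:R.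

Lemma sum_wstep_mul w (X : 'I_n -> R) :
  \sum_(c < n) wstep w c * X c = \sum_(i < n) \sum_(j < n) D i * D j * X (sel w i j).
Proof.
rewrite /wstep; under eq_bigr do rewrite mulr_suml.
rewrite exchange_big; apply: eq_bigr => i _; under eq_bigr do rewrite mulr_suml.
rewrite exchange_big; apply: eq_bigr => j _.
rewrite (bigD1 (sel w i j)) //= eqxx mulr1 big1 ?addr0 // => c.
by rewrite eq_sym => /negbTE ->; rewrite mulr0 mul0r.
Qed.

Lemma sum_wstep w : \sum_(c < n) wstep w c = 1.
Proof.
transitivity (\sum_(c < n) wstep w c * 1); first by apply: eq_bigr => c _; rewrite mulr1.
rewrite sum_wstep_mul -[RHS](mulr1 1) -[in RHS]D_sum mulr_suml.
by apply: eq_bigr => i _; rewrite mulr_sumr; apply: eq_bigr => j _; rewrite mulr1.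
Qed.

Lemma wstep_ge0 w c : 0 <= wstep w c.
Proof. by apply: sumr_ge0 => i _; apply: sumr_ge0 => j _; rewrite !mulr_ge0. Qed.

Lemma wrank_range w c : (0 < wrank R Nw w c <= NN)%N.
Proof.
apply/andP; split; first by rewrite /wrank (bigD1 c) //= ltn_addr.
by rewrite /wrank [X in (_ <= X)%N](bigID (fun j => wval w c <= wval w j)) leq_addr.
Qed.

Lemma wstep_rank_cdf w m :
  \sum_(c < n | (wrank R Nw w c <= m)%N) wstep w c <= phi NN eps m.
Proof.
have [c1 rank_c1|none] := pickP (fun c => (wrank R Nw w c <= m)%N); last first.
  by rewrite big_pred0 // powR_ge0.
case: (@arg_minP _ _ _ c1 (fun c => wrank R Nw w c <= m)%N (wval w) rank_c1).
move=> b rank_b b_min.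
pose U j := wval w b <= wval w j.
pose d := \sum_(i < n | U i) D i.
have cdf_le_sq : \sum_(c < n | (wrank R Nw w c <= m)%N) wstep w c <= d ^+ 2.
  have -> : \sum_(c < n | (wrank R Nw w c <= m)%N) wstep w c
            = \sum_(c < n) wstep w c * (wrank R Nw w c <= m)%N%:R.
    by rewrite big_mkcond; apply: eq_bigr => c _; case: ifP; rewrite ?mulr1 ?mulr0.
  have UD_ge0 k : 0 <= if U k then D k else 0 by case: ifP.
  rewrite sum_wstep_mul expr2 /d [X in _ <= X * _]big_mkcond mulr_suml /=.
  apply: ler_sum => i _; rewrite [X in _ <= _ * X]big_mkcond mulr_sumr.
  apply: ler_sum => j _ /=.
  have [/b_min le_b|_] := boolP (wrank R Nw w (sel w i j) <= m)%N; last first.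
    by rewrite mulr0 mulr_ge0.
  have [_ [le_i le_j]] := sel_valid w i j.
  by rewrite /U (le_trans le_b le_i) (le_trans le_b le_j) mulr1.
have [d_small d_large] :=
  biased_mass_le U (lt_trans ltr01 alpha_gt1) total_weight_gt0 D_biased.
set s := _ / _ in d_small d_large.
have s_le : s <= m%:R / NN%:R.
  by rewrite ler_wpM2r ?invr_ge0 // ler_nat.
have s01 : 0 < s <= 1.
  have /andP[rank_gt0 rank_le] := wrank_range w b.
  rewrite divr_gt0 ?ltr0n ?total_weight_gt0 //=.
  by rewrite ler_pdivrMr ?ltr0n ?total_weight_gt0 // mul1r ler_nat.
have d_ge0 : 0 <= d by apply: sumr_ge0.
have := sq_le_powR_of_mass alpha_gt1 beta_gt1 eps_gt0 eps_le s01 d_ge0 d_small d_large.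
move=> /(le_trans cdf_le_sq) /le_trans; apply.
by apply: powR_le_phi; rewrite // s_le ltW //; case/andP: s01.
Qed.

Lemma cexp_le_wexp (f : cstate -> R) (g : wstate n -> R) :
  (forall x w, coupled Nw x w -> f x <= g w) ->
  forall t x w, coupled Nw x w -> cexp NN eps f t x <= wexp D sel g t w.
Proof.
move=> le_fg; elim=> [|t IH] x w cpl /=; first exact: le_fg.
rewrite -(sum_wstep_mul w (fun c => wexp D sel g t (wadd w c))).
have [c0 _ c0_min] := @arg_minP _ _ _ i0 xpredT (wval w) isT.
apply: (ler_sum_coupling (L := wrank R Nw w) (i0 := c0) (q := wstep w)
          (p := fun k => phi NN eps k.+1 - phi NN eps k)
          (F := fun k => cexp NN eps f t (cadd x k))
          (G := fun c => wexp D sel g t (wadd w c))).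
- by move=> k; rewrite subr_ge0 phi_le.
- exact: wstep_ge0.
- exact: wrank_range.
- by apply: eq_leq; apply: eq_bigl => j; rewrite c0_min.
- by rewrite sum_wstep sum_phiD // phi_total // total_weight_gt0.
- by move=> m _; rewrite sum_phiD // wstep_rank_cdf.
- by move=> k c lt_kN lt_kc; apply: IH; exact: coupled_step Nw_gt0 cpl lt_kN lt_kc.
Qed.

End Domination.

Theorem lemma1 (R : realType) (n : nat) (Nw : 'I_n -> nat) (D : 'I_n -> R)
  (alpha beta eps : R)
  (sel : wstate n -> 'I_n -> 'I_n -> 'I_n) :
  (forall i, (0 < Nw i)%N) ->
  1 < alpha -> 1 < beta ->
  biased Nw D alpha beta ->
  valid_selection R Nw sel ->
  0 < eps ->
  eps <= 2 * ln ((alpha * beta - 1) / (alpha * beta - beta))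
           / ln ((alpha * beta - 1) / (alpha - 1)) - 1 ->
  forall (t : nat) (b : R),
    cprob_gap_le (\sum_(i < n) Nw i)%N eps t b <= wprob_gap_le Nw D sel t b.
Proof.
move=> Nw_gt0 alpha_gt1 beta_gt1 D_biased sel_valid eps_gt0 eps_le t b.
apply: (cexp_le_wexp Nw_gt0 alpha_gt1 beta_gt1 D_biased sel_valid eps_gt0 eps_le)
  (coupled_empty Nw) => x w cpl.
have x_gt0 : (0 < size x)%N.
  by have [-> _ _ _] := cpl; exact: total_weight_gt0 Nw_gt0 D_biased.
case: ifP => [cgap_le|_]; last by case: ifP.
by rewrite (le_trans (coupled_wgap_le Nw_gt0 cpl x_gt0 R) cgap_le).
Qed.
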